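(* Let $\mathfrak S=(S,\xrightarrow{F},\le)$ be a complete functional transition system and $s_0\in S$. Let $g_1,\dots,g_n\in F$, and assume $g_n^\infty(\cdots g_2^\infty(g_1^\infty(s_0))\cdots)$ is defined and lies in some Scott-open subset $U$ of $S$. Then there are natural numbers $k_1,\dots,k_n$ such that $g_n^{k_n}(\cdots g_2^{k_2}(g_1^{k_1}(s_0))\cdots)$ is defined and lies in $U$.
   Context: Complete functional transition system: $(S,\le)$ a well partial order which is a continuous dcpo; $F$ a finite set of partial continuous maps (domain Scott-open; $f(\bigvee D)=\bigvee f(D)$ for directed $D\subseteq\operatorname{dom}f$). Scott-open: upward-closed $U$ such that any directed $D$ with $\bigvee D\in U$ meets $U$. Lub-acceleration of a partial continuous $g$: $\operatorname{dom}g^\infty=\operatorname{dom}g$ and $g^\infty(x)=\bigvee_{n\in\mathbb N}g^n(x)$ if $x<g(x)$, $g^\infty(x)=g(x)$ otherwise. *)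

From Stdlib Require Import List.
Import ListNotations.
Set Implicit Arguments.

Section Defs.
Variable T : Type.
Variable le : T -> T -> Prop.

Definition lt (x y : T) : Prop := le x y /\ x <> y.

Definition partial_order : Prop :=
  (forall x, le x x) /\
  (forall x y, le x y -> le y x -> x = y) /\
  (forall x y z, le x y -> le y z -> le x z).

Definition wpo : Prop :=
  partial_order /\
  forall f : nat -> T, exists i j, i < j /\ le (f i) (f j).

Definition directed (D : T -> Prop) : Prop :=
  (exists d, D d) /\
  forall x y, D x -> D y -> exists z, D z /\ le x z /\ le y z.

Definition is_lub (D : T -> Prop) (s : T) : Prop :=
  (forall d, D d -> le d s) /\
  (forall u, (forall d, D d -> le d u) -> le s u).

Definition dcpo : Prop :=
  partial_order /\ forall D, directed D -> exists s, is_lub D s.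

Definition way_below (x y : T) : Prop :=
  forall D s, directed D -> is_lub D s -> le y s -> exists d, D d /\ le x d.

Definition continuous_dcpo : Prop :=
  dcpo /\
  forall x, directed (fun y => way_below y x) /\ is_lub (fun y => way_below y x) x.

Definition upward_closed (U : T -> Prop) : Prop :=
  forall x y, U x -> le x y -> U y.

Definition scott_open (U : T -> Prop) : Prop :=
  upward_closed U /\
  forall D s, directed D -> is_lub D s -> U s -> exists d, D d /\ U d.

(* Partial maps are modelled as T -> option T; dom g = {x | g x <> None}. *)
Definition dom (g : T -> option T) (x : T) : Prop := g x <> None.

Definition partial_continuous (g : T -> option T) : Prop :=
  scott_open (dom g) /\
  forall D s, directed D -> (forall d, D d -> dom g d) -> is_lub D s ->
    exists t, g s = Some t /\
      is_lub (fun y => exists d, D d /\ g d = Some y) t.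

(* Complete functional transition system (S, F, <=), F finite (a list). *)
Definition complete_FTS (F : list (T -> option T)) : Prop :=
  wpo /\ continuous_dcpo /\ forall g, In g F -> partial_continuous g.

Fixpoint iterp (g : T -> option T) (n : nat) (x : T) : option T :=
  match n with
  | O => Some x
  | S n' => match iterp g n' x with Some y => g y | None => None end
  end.

(* Lub-acceleration as a (functional) relation: accel g x y  <->  g^oo(x) = y.
   dom g^oo = dom g; g^oo(x) = \/_n g^n(x) if x < g(x), g(x) otherwise. *)
Definition accel (g : T -> option T) (x y : T) : Prop :=
  dom g x /\
  ((exists gx, g x = Some gx /\ lt x gx) ->
      is_lub (fun z => exists n, iterp g n x = Some z) y) /\
  (~ (exists gx, g x = Some gx /\ lt x gx) -> g x = Some y).

(* accel_seq [g1;...;gn] x y  <->  g_n^oo(... g_1^oo(x) ...) is defined and = y *)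
Fixpoint accel_seq (gs : list (T -> option T)) (x y : T) : Prop :=
  match gs with
  | [] => y = x
  | g :: gs' => exists z, accel g x z /\ accel_seq gs' z y
  end.

Fixpoint iter_seq (gs : list (T -> option T)) (ks : list nat) (x : T)
  : option T :=
  match gs, ks with
  | g :: gs', k :: ks' =>
      match iterp g k x with Some z => iter_seq gs' ks' z | None => None end
  | _, _ => Some x
  end.
End Defs.

From Stdlib Require Import List Classical Arith Lia.

(* A Scott-open set is inaccessible by directed suprema, and preimages of
   Scott-open sets under continuous partial maps (hence under finite
   compositions of their iterates) are Scott-open.  The accelerated value
   g^oo(x) is either g(x) or the supremum of the increasing chain g^n(x); so if
   it lies in an open set V, some finite iterate g^k(x) already does.  Applying
   this to g_1 with V the (open) set of states from which some finite iteration
   of g_2, ..., g_n reaches U, and inducting on n, gives the exponents. *)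

Definition preim {T : Type} (g : T -> option T) (U : T -> Prop) (x : T) : Prop :=
  exists t, g x = Some t /\ U t.

Definition reaches {T : Type} (gs : list (T -> option T)) (U : T -> Prop) (x : T)
  : Prop :=
  exists ks : list nat, length ks = length gs /\ preim (iter_seq gs ks) U x.

Section ScottOpen.
Context {T : Type} {le : T -> T -> Prop}.
Hypothesis Hpo : partial_order le.

Lemma scott_open_ext {A B : T -> Prop} :
  (forall x, A x <-> B x) -> scott_open le A -> scott_open le B.
Proof.
  intros E [Hup Hin]. split.
  - intros x y Bx Hxy. apply E. apply (Hup x y); [apply E|]; auto.
  - intros D s HD Hs Bs. destruct (Hin D s HD Hs (proj2 (E s) Bs)) as [d [Dd Ad]].
    exists d. split; auto. apply E; auto.
Qed.

Lemma scott_open_exists (I : Type) (A : I -> T -> Prop) :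
  (forall i, scott_open le (A i)) -> scott_open le (fun x => exists i, A i x).
Proof.
  intros HA. split.
  - intros x y [i Ax] Hxy. exists i. exact (proj1 (HA i) x y Ax Hxy).
  - intros D s HD Hs [i As]. destruct (proj2 (HA i) D s HD Hs As) as [d [Dd Ad]].
    exists d. split; [exact Dd | exists i; exact Ad].
Qed.

Lemma partial_continuous_monotone {g : T -> option T} {x y t : T} :
  partial_continuous le g -> le x y -> g x = Some t ->
  exists t', g y = Some t' /\ le t t'.
Proof.
  destruct Hpo as [Hrefl _].
  intros [[Hdom_up _] Hcont] Hxy Hgx.
  destruct (Hcont (fun d => d = x \/ d = y) y) as [t' [Hgy Hlub]].
  - split; [exists x; auto|].
    intros a b Ha Hb. exists y.
    destruct Ha as [-> | ->], Hb as [-> | ->]; auto.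
  - intros d [-> | ->]; [unfold dom; congruence|].
    apply (Hdom_up x y); [unfold dom; congruence | exact Hxy].
  - split; [intros d [-> | ->]; auto | intros u Hu; apply Hu; auto].
  - exists t'. split; [exact Hgy|]. apply Hlub. exists x. auto.
Qed.

Section Above.
Context {D : T -> Prop} {d0 : T}.
Hypotheses (HD : directed le D) (Dd0 : D d0).

Lemma directed_above : directed le (fun d => D d /\ le d0 d).
Proof.
  destruct Hpo as [Hrefl [_ Htrans]].
  split; [exists d0; auto|].
  intros a b [Da Ha] [Db Hb]. destruct (proj2 HD a b Da Db) as [z [Dz [Haz Hbz]]].
  exists z. repeat split; eauto.
Qed.

Lemma is_lub_above {s : T} : is_lub le D s -> is_lub le (fun d => D d /\ le d0 d) s.
Proof.
  destruct Hpo as [_ [_ Htrans]].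
  intros [Hub Hleast]. split; [intros d [Dd _]; auto|].
  intros u Hu. apply Hleast. intros d Dd.
  destruct (proj2 HD d d0 Dd Dd0) as [z [Dz [Hdz Hd0z]]].
  apply (Htrans d z u Hdz). apply Hu. auto.
Qed.

End Above.

Lemma directed_image {g : T -> option T} {D : T -> Prop} :
  partial_continuous le g -> directed le D -> (forall d, D d -> dom g d) ->
  directed le (fun y => exists d, D d /\ g d = Some y).
Proof.
  intros Hg [[d0 Dd0] HD] Hdom. split.
  - destruct (g d0) as [t0|] eqn:E0; [exists t0, d0; auto|].
    exfalso. exact (Hdom d0 Dd0 E0).
  - intros a b [da [Da Ga]] [db [Db Gb]].
    destruct (HD da db Da Db) as [z [Dz [Haz Hbz]]].
    destruct (partial_continuous_monotone Hg Haz Ga) as [tz [Gz Hatz]].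
    destruct (partial_continuous_monotone Hg Hbz Gb) as [tz' [Gz' Hbtz]].
    rewrite Gz in Gz'. injection Gz' as <-.
    exists tz. split; [exists z; auto | auto].
Qed.

Lemma scott_open_preim {g : T -> option T} {U : T -> Prop} :
  partial_continuous le g -> scott_open le U -> scott_open le (preim g U).
Proof.
  intros Hg HU. split.
  - intros x y [t [Hgx Ut]] Hxy.
    destruct (partial_continuous_monotone Hg Hxy Hgx) as [t' [Hgy Htt']].
    exists t'. split; [exact Hgy | exact (proj1 HU t t' Ut Htt')].
  - intros D s HD Hs [t [Hgs Ut]].
    pose proof Hg as [[Hdom_up Hdom_in] Hcont].
    (* Restrict D above some d0 in dom g, so continuity applies. *)
    destruct (Hdom_in D s HD Hs ltac:(unfold dom; congruence)) as [d0 [Dd0 Hd0]].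
    set (D' := fun d => D d /\ le d0 d).
    assert (HdomD' : forall d, D' d -> dom g d) by (intros d [_ H]; eauto).
    destruct (Hcont D' s (directed_above HD Dd0) HdomD' (is_lub_above HD Dd0 Hs))
      as [t' [Hgs' Hlub]].
    rewrite Hgs in Hgs'. injection Hgs' as <-.
    destruct (proj2 HU _ t (directed_image Hg (directed_above HD Dd0) HdomD') Hlub Ut)
      as [e [[d [[Dd _] Gd]] Ue]].
    exists d. split; [exact Dd | exists e; auto].
Qed.

Lemma preim_iterp_S (g : T -> option T) k (U : T -> Prop) x :
  preim (iterp g (S k)) U x <-> preim (iterp g k) (preim g U) x.
Proof.
  unfold preim; simpl. destruct (iterp g k x) as [y|]; split.
  - intros [t [Hgy Ut]]. eauto.
  - intros [y' [Hy [t Ht]]]. injection Hy as <-. eauto.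
  - intros [t [H _]]; discriminate.
  - intros [t [H _]]; discriminate.
Qed.

Lemma preim_Some (U : T -> Prop) x : preim Some U x <-> U x.
Proof.
  unfold preim. split; [intros [t [H Ut]]; injection H as <-; auto | eauto].
Qed.

Lemma scott_open_preim_iterp {g : T -> option T} (k : nat) {U : T -> Prop} :
  partial_continuous le g -> scott_open le U -> scott_open le (preim (iterp g k) U).
Proof.
  intros Hg. revert U. induction k as [|k IH]; intros U HU.
  - apply (scott_open_ext (fun x => iff_sym (preim_Some U x)) HU).
  - apply (scott_open_ext (fun x => iff_sym (preim_iterp_S g k U x))).
    apply IH, scott_open_preim; assumption.
Qed.

Lemma preim_iter_seq_cons g gs k ks (U : T -> Prop) x :
  preim (iter_seq (g :: gs) (k :: ks)) U x <->
  preim (iterp g k) (preim (iter_seq gs ks) U) x.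
Proof.
  unfold preim; simpl. destruct (iterp g k x) as [y|]; split.
  - eauto.
  - intros [y' [Hy Hrest]]. injection Hy as <-. exact Hrest.
  - intros [t [H _]]; discriminate.
  - intros [t [H _]]; discriminate.
Qed.

Lemma scott_open_preim_iter_seq gs ks (U : T -> Prop) :
  (forall g, In g gs -> partial_continuous le g) -> scott_open le U ->
  scott_open le (preim (iter_seq gs ks) U).
Proof.
  revert ks. induction gs as [|g gs IH]; intros ks Hgs HU.
  - apply (scott_open_ext (fun x => iff_sym (preim_Some U x)) HU).
  - destruct ks as [|k ks]; [apply (scott_open_ext (fun x => iff_sym (preim_Some U x)) HU)|].
    apply (scott_open_ext (fun x => iff_sym (preim_iter_seq_cons g gs k ks U x))).
    apply scott_open_preim_iterp; [apply Hgs; left; reflexivity|].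
    apply IH; [intros; apply Hgs; right|]; assumption.
Qed.

Lemma scott_open_reaches {gs : list (T -> option T)} {U : T -> Prop} :
  (forall g, In g gs -> partial_continuous le g) -> scott_open le U ->
  scott_open le (reaches gs U).
Proof.
  intros Hgs HU. unfold reaches.
  apply (scott_open_ext (A := fun x => exists ks : {ks : list nat | length ks = length gs},
                                         preim (iter_seq gs (proj1_sig ks)) U x)).
  - intros x. split.
    + intros [[ks Hl] Hx]. exists ks. auto.
    + intros [ks [Hl Hx]]. exists (exist _ ks Hl). exact Hx.
  - apply scott_open_exists. intros ks. apply scott_open_preim_iter_seq; assumption.
Qed.

Section Chain.
Context {g : T -> option T} {x gx : T}.
Hypotheses (Hg : partial_continuous le g) (Hgx : g x = Some gx) (Hxgx : le x gx).

Lemma iterp_inflationary n : exists a b, iterp g n x = Some a /\ g a = Some b /\ le a b.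
Proof.
  induction n as [|n [a [b [Ha [Hab Hle]]]]]; [exists x, gx; auto|].
  destruct (partial_continuous_monotone Hg Hle Hab) as [c [Hbc Hbc_le]].
  exists b, c. simpl. rewrite Ha. auto.
Qed.

Lemma iterp_increasing n m :
  exists a b, iterp g n x = Some a /\ iterp g (n + m) x = Some b /\ le a b.
Proof.
  destruct Hpo as [Hrefl [_ Htrans]].
  induction m as [|m [a [b [Ha [Hb Hab]]]]].
  - destruct (iterp_inflationary n) as [a [_ [Ha _]]].
    exists a, a. rewrite Nat.add_0_r. auto.
  - destruct (iterp_inflationary (n + m)) as [b' [c [Hb' [Hbc Hle]]]].
    rewrite Hb in Hb'. injection Hb' as <-.
    exists a, c. rewrite <- plus_n_Sm. simpl. rewrite Hb. eauto.
Qed.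

Lemma iterp_directed : directed le (fun z => exists n, iterp g n x = Some z).
Proof.
  destruct Hpo as [Hrefl _].
  split; [exists x, 0; reflexivity|].
  intros a b [n Hn] [m Hm].
  destruct (le_ge_dec n m) as [Hnm | Hmn].
  - destruct (iterp_increasing n (m - n)) as [a' [b' [Ha' [Hb' Hab]]]].
    replace (n + (m - n)) with m in Hb' by lia.
    rewrite Hn in Ha'. injection Ha' as <-. rewrite Hm in Hb'. injection Hb' as <-.
    exists b. split; [exists m; exact Hm | split; [exact Hab | apply Hrefl]].
  - destruct (iterp_increasing m (n - m)) as [b' [a' [Hb' [Ha' Hba]]]].
    replace (m + (n - m)) with n in Ha' by lia.
    rewrite Hm in Hb'. injection Hb' as <-. rewrite Hn in Ha'. injection Ha' as <-.
    exists a. split; [exists n; exact Hn | split; [apply Hrefl | exact Hba]].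
Qed.

End Chain.

Lemma accel_preim_iterp {g : T -> option T} {V : T -> Prop} {x z : T} :
  partial_continuous le g -> scott_open le V -> accel le g x z -> V z ->
  exists k, preim (iterp g k) V x.
Proof.
  intros Hg HV [_ [Hlub Hval]] Vz.
  destruct (classic (exists gx, g x = Some gx /\ lt le x gx)) as [Hlt | Hnlt].
  - pose proof (Hlub Hlt) as Hz.
    destruct Hlt as [gx [Hgx [Hxgx _]]].
    destruct (proj2 HV _ z (iterp_directed Hg Hgx Hxgx) Hz Vz) as [w [[k Hk] Vw]].
    exists k, w. auto.
  - exists 1, z. simpl. auto.
Qed.

Lemma accel_seq_reaches {gs : list (T -> option T)} {U : T -> Prop} {x y : T} :
  (forall g, In g gs -> partial_continuous le g) -> scott_open le U ->
  accel_seq le gs x y -> U y -> reaches gs U x.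
Proof.
  intros Hgs HU. revert x. induction gs as [|g gs IH]; intros x Hxy Uy.
  - simpl in Hxy. subst y. exists nil. split; [reflexivity | exists x; auto].
  - destruct Hxy as [z [Hacc Hzy]].
    assert (Hgs' : forall h, In h gs -> partial_continuous le h)
      by (intros; apply Hgs; right; assumption).
    destruct (accel_preim_iterp (Hgs g (or_introl eq_refl))
                (scott_open_reaches Hgs' HU) Hacc (IH Hgs' z Hzy Uy))
      as [k Hk].
    destruct Hk as [w [Hw [ks [Hlen Hws]]]].
    exists (k :: ks). split; [simpl; congruence|].
    apply preim_iter_seq_cons. exists w. auto.
Qed.

End ScottOpen.

Theorem lemma5p17 (S : Type) (le : S -> S -> Prop)
  (F : list (S -> option S)) (s0 : S)
  (HF : complete_FTS le F)
  (gs : list (S -> option S)) (Hgs : forall g, In g gs -> In g F)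
  (U : S -> Prop) (HU : scott_open le U)
  (y : S) (Hy : accel_seq le gs s0 y) (HyU : U y) :
  exists ks : list nat, length ks = length gs /\
    exists z, iter_seq gs ks s0 = Some z /\ U z.
Proof.
  destruct HF as [[Hpo _] [_ HFcont]].
  exact (accel_seq_reaches Hpo (fun g Hg => HFcont g (Hgs g Hg)) HU Hy HyU).
Qed.
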